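(* Let $N=n$ be prime, $f=x_1^N+\dots+x_N^N$, $S\subseteq S_N$, $G=S\ltimes\mathrm{SL}_f$. Let $\sigma=\prod_{a=1}^p\sigma_a\in S$ be a disjoint cycle decomposition (length-1 cycles included) with supports $I_a$, let $\widetilde x_{a}=\sum_{k\in I_a}x_k$, and let $X=\prod_{a=1}^p\lfloor\widetilde x_{a}^{r_a}\rfloor\xi_{\sigma_a}\in\mathcal A'_{f,\sigma}$ with $0\le r_a\le N-2$. For each $a$ let $k_a\in\{1,\dots,N-1\}$ be the unique integer with $r_a+1\equiv k_a|\sigma_a|\pmod N$. If $X$ is nonzero in $\mathcal A_{f,G}$, i.e. $X$ is invariant under $Z_G(\sigma)$, then $k_a=k_b$ for all $1\le a,b\le p$.
   Context: $\zeta=\exp(2\pi\sqrt{-1}/N)$; $t_k$ multiplies $x_k$ by $\zeta$; $G_f^d=\langle t_1,\dots,t_N\rangle$, $\mathrm{SL}_f=\{g\in G_f^d:\det g=1\}$; $S_N$ permutes coordinates. For $u\in S_N\ltimes G_f^d$: $\mathrm{Fix}(u)$ is the eigenvalue-1 subspace, $M_u$ the sum of the other eigenspaces, $\mathcal A'_{f,u}=\mathrm{Jac}(f|_{\mathrm{Fix}(u)})\,\xi_u$ with formal generator $\xi_u$; for a permutation $\sigma=\prod_a\sigma_a$ one writes $\xi_\sigma=\prod_a\xi_{\sigma_a}$ and $\lfloor\prod_a\widetilde x_a^{r_a}\rfloor\xi_\sigma=\prod_a\lfloor\widetilde x_a^{r_a}\rfloor\xi_{\sigma_a}$. For $v\in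 Z_G(u)$, $v^*(\lfloor\phi(\mathbf x)\rfloor\xi_u)=\det(v|_{M_u})^{-1}\lfloor\phi(v\cdot\mathbf x)\rfloor\xi_u$. The phase space is $\mathcal A_{f,G}=\bigoplus_{u\in\mathcal C^G}(\mathcal A'_{f,u})^{Z_G(u)}$, $\mathcal C^G$ a set of conjugacy class representatives. *)

From HB Require Import structures.
From mathcomp Require Import all_boot all_order all_algebra all_fingroup all_field.
From mathcomp Require Import mpoly.
Set Implicit Arguments. Unset Strict Implicit. Unset Printing Implicit Defensive.
Import Order.TTheory GRing.Theory Num.Theory.
Local Open Scope ring_scope.

Section Defs.
Variable N : nat.

Definition zeta : algC :=
  match N as m return algC with
  | 0 => 1
  | m.+1 => sval (C_prim_root_exists (ltn0Sn m))
  end.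

(* Elements of G_f^d = < t_1, ..., t_N > : diag(zeta^e_1, ..., zeta^e_N). *)
Definition diag_of (e : 'I_N -> nat) : 'M[algC]_N :=
  diag_mx (\row_i (zeta ^+ e i)).

Definition in_SLf (g : 'M[algC]_N) : Prop :=
  (exists e : 'I_N -> nat, g = diag_of e) /\ \det g = 1.

(* G = S |x SL_f, realised as a group of N x N matrices acting on row
   vectors x (x |-> x *m v); the permutation s acts by perm_mx s. *)
Definition in_G (S : {group {perm 'I_N}}) (v : 'M[algC]_N) : Prop :=
  exists s, exists g, [/\ s \in S, in_SLf g & v = perm_mx s *m g].

Definition in_centralizer (S : {group {perm 'I_N}}) (u v : 'M[algC]_N) : Prop :=
  in_G S v /\ v *m u = u *m v.

Definition Fix (u : 'M[algC]_N) : 'M[algC]_N := eigenspace u 1.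

Definition eigs (u : 'M[algC]_N) : seq algC :=
  undup (sval (closed_field_poly_normal (char_poly u))).

Definition Mspace (u : 'M[algC]_N) : 'M[algC]_N :=
  (\sum_(l <- eigs u | l != 1) eigenspace u l)%MS.

Definition det_restr (v W : 'M[algC]_N) : algC :=
  \det (row_base W *m v *m pinvmx (row_base W)).

Definition fermat : {mpoly algC[N]} := \sum_(i < N) 'X_i ^+ N.

Definition dderiv (w : 'rV[algC]_N) (p : {mpoly algC[N]}) : {mpoly algC[N]} :=
  \sum_(i < N) w 0 i *: mderiv i p.

Definition pullback (v : 'M[algC]_N) (p : {mpoly algC[N]}) : {mpoly algC[N]} :=
  p \mPo [tuple \sum_(i < N) v i j *: 'X_i | j < N].

(* Kernel of C[x] -> Jac(f|_{Fix(u)}):  p|_{Fix(u)} lies in the Jacobian ideal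
   of f|_{Fix(u)}, i.e. p = q + sum_k h_k * d_{w_k} f with q vanishing on
   Fix(u) and directions w_k in Fix(u). *)
Definition in_jac_kernel (u : 'M[algC]_N) (p : {mpoly algC[N]}) : Prop :=
  exists (q : {mpoly algC[N]}) (ws : seq ('rV[algC]_N * {mpoly algC[N]})),
    [/\ forall x : 'rV[algC]_N, (x <= Fix u)%MS -> q.@[x 0] = 0,
        all (fun wh => (wh.1 <= Fix u)%MS) ws &
        p = q + \sum_(wh <- ws) wh.2 * dderiv wh.1 fermat].

(* The class of phi * xi_u in A'_{f,u} is fixed by v^*:
   v^*(|_phi_| xi_u) = det(v|M_u)^-1 |_phi(v.x)_| xi_u. *)
Definition invariant_by (u v : 'M[algC]_N) (phi : {mpoly algC[N]}) : Prop :=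
  in_jac_kernel u ((det_restr v (Mspace u))^-1 *: pullback v phi - phi).

Definition Xpoly (s : {perm 'I_N}) (r : {set 'I_N} -> nat) : {mpoly algC[N]} :=
  \prod_(A in porbits s) (\sum_(k in A) 'X_k) ^+ r A.

End Defs.

(* Let D be the diagonal matrix acting by zeta^(e C) on the coordinates of each
   sigma-orbit C, with e A = |B|, e B = (N-1)|A| and e C = 0 otherwise.  D commutes
   with sigma and det D = zeta^(N|A||B|) = 1, so D lies in SL_f and centralizes sigma.  D scales X by lambda = prod_C zeta^(e C r C).
   On Fix sigma, with one coordinate y_C per orbit, f restricts to sum_C |C| y_C^N,
   whose Jacobian ideal is generated by the y_C^(N-1), while X restricts to a nonzero
   multiple of prod_C y_C^(r C) with every r C <= N-2; so X is not in the Jacobian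
   ideal and invariance forces det(D|M_sigma) = lambda.  The orbit indicator vectors
   form a basis of Fix sigma made of eigenvectors of D, so det(D|Fix sigma) =
   prod_C zeta^(e C); as sigma has finite order, C^N = Fix sigma (+) M_sigma and
   1 = det D = prod_C zeta^(e C (r C + 1)), i.e. |B|(r A + 1) = |A|(r B + 1) mod N.
   Substituting r + 1 = k |.| and cancelling |A||B|, prime to N because r + 1 is
   not divisible by N, gives k_A = k_B. *)

From HB Require Import structures.
From mathcomp Require Import all_boot all_order all_algebra all_fingroup all_field.
From mathcomp Require Import mpoly.
From mathcomp Require Import zify.
Set Implicit Arguments. Unset Strict Implicit. Unset Printing Implicit Defensive.
Import Order.TTheory GRing.Theory Num.Theory.
Local Open Scope ring_scope.

Section MPolyIdentity.
Variable R : numDomainType.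

Local Notation widen := (widen_ord (leqnSn _)).

Lemma mcoeff_muni n (p : {mpoly R[n.+1]}) (m : 'X_{1..n.+1}) :
  ((muni p)`_(m ord_max))@_[multinom m (widen i) | i < n] = p@_m.
Proof.
rewrite [in RHS](mpolyE p) muniE coef_sum !raddf_sum /=.
apply: eq_bigr => m' _; rewrite coefZ coefXn mulr_natr mcoeffMn !mcoeffZ !mcoeffX.
have -> : (m' == m) = ([multinom m' (widen i) | i < n] == [multinom m (widen i) | i < n])
                      && (m ord_max == m' ord_max).
  apply/eqP/andP => [->|[/eqP e1 /eqP e2]] //; apply/mnmP => i.
  case: (unliftP ord_max i) => [j ->|->] //.
  have := congr1 (fun mm : 'X_{1..n} => mm j) e1; rewrite !mnmE.
  by have -> : lift ord_max j = widen j by apply/val_inj; rewrite /= /bump leqNgt ltn_ord.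
by case: eqP; case: eqP; rewrite /= ?mulr0 ?mulr1 ?mulr0n ?mulr1n.
Qed.

Lemma meval_muni n (p : {mpoly R[n.+1]}) (z : 'I_n.+1 -> R) :
  p.@[z] = (map_poly (meval (z \o widen)) (muni p)).[z ord_max].
Proof.
rewrite muniE mevalE rmorph_sum horner_sum; apply: eq_bigr => m _.
rewrite /= map_polyZ map_polyXn hornerZ hornerXn /= mevalZ mevalX.
by rewrite big_ord_recr /= mulrA; congr (_ * _ * _); apply: eq_bigr => i _; rewrite mnmE.
Qed.

Lemma mpoly_eq0_meval n (p : {mpoly R[n]}) : (forall z, p.@[z] = 0) -> p = 0.
Proof.
elim: n p => [|n IH] p p0.
  apply/mpolyP => k; rewrite mcoeff0 -(p0 (fun _ => 0)) mevalE [in LHS](mpolyE p) raddf_sum /=.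
  apply: eq_bigr => m _; rewrite big_ord0 mulr1 mcoeffZ mcoeffX.
  have mk : m = k by apply/mnmP => -[].
  by rewrite mk eqxx mulr1.
suff muni0 : muni p = 0 by apply/mpolyP => m; rewrite -mcoeff_muni muni0 coef0 !mcoeff0.
apply/polyP => k; rewrite coef0; apply: IH => v.
pose Q := map_poly (meval v) (muni p).
suff Q0 : Q = 0 by have := congr1 (fun q : {poly R} => q`_k) Q0; rewrite /= coef_map coef0.
apply/eqP/negPn/negP => Q_neq0.
pose ext (t : R) i := if unlift ord_max i is Some j then v j else t.
have rootQ t : root Q t.
  apply/eqP; rewrite -(p0 (ext t)) meval_muni /ext unlift_none.
  congr (horner _ _); apply: eq_map_poly => q; apply: meval_eq => i /=.
  have -> : widen i = lift ord_max i by apply/val_inj; rewrite /= /bump leqNgt ltn_ord.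
  by rewrite liftK.
pose rs : seq R := [seq i%:R | i <- iota 0 (size Q)].
have rs_roots : all (root Q) rs by apply/allP => x _; apply: rootQ.
have rs_uniq : uniq rs.
  by rewrite map_inj_uniq ?iota_uniq // => a b /eqP; rewrite eqr_nat => /eqP.
by have := max_poly_roots Q_neq0 rs_roots rs_uniq; rewrite size_map size_iota ltnn.
Qed.

End MPolyIdentity.

Section RestrictDet.
Variable F : fieldType.

Lemma det_conjmx_eqmx k1 k2 n (V : 'M[F]_(k1, n)) (W : 'M_(k2, n)) (f : 'M_n) :
  row_free V -> row_free W -> (V :=: W)%MS -> stablemx W f ->
  \det (conjmx V f) = \det (conjmx W f).
Proof.
move=> freeV freeW eqVW Wf.
have k12 : k1 = k2 by move: freeV freeW; rewrite /row_free eqVW => /eqP <- /eqP.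
subst k2; set C := V *m pinvmx W.
have VE : V = C *m W by rewrite mulmxKpV ?eqVW.
have Cu : C \in unitmx.
  by rewrite -row_free_unit /row_free eqn_leq rank_leq_row -{1}(eqP freeV) VE mxrankM_maxl.
have detC : \det C != 0 by rewrite -unitfE -unitmxE.
by rewrite VE conjuMmx // conjumx // !det_mulmx det_inv mulrC mulrA mulVf ?mul1r.
Qed.

Lemma det_restrict_adds n (U W f : 'M[F]_n) :
  mxdirect (U + W) -> (U + W :=: 1%:M)%MS -> stablemx U f -> stablemx W f ->
  \det f = \det (restrictmx U f) * \det (restrictmx W f).
Proof.
move=> dUW fullUW Uf Wf.
pose K := col_mx (row_base U) (row_base W).
have eqK : (K :=: U + W)%MS.
  exact: eqmx_trans (eqmx_sym (addsmxE _ _)) (adds_eqmx (eq_row_base U) (eq_row_base W)).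
have freeK : row_free K by rewrite /row_free eqK; move: dUW; rewrite mxdirectE.
have free1 : row_free (1%:M : 'M[F]_n) by rewrite row_free_unit unitmx1.
have Kf : stablemx K f by rewrite /K mul_col_mx -!addsmxE addsmxS ?stablemx_row_base.
rewrite -[f in LHS]conj1mx -(det_conjmx_eqmx freeK free1 (eqmx_trans eqK fullUW)) ?submx1 //.
have -> : conjmx K f = block_mx (restrictmx U f) 0 0 (restrictmx W f).
  apply: (row_free_inj freeK); rewrite /= mul_block_col !mul0mx addr0 add0r.
  by rewrite /conjmx !mulmxKpV ?stablemx_row_base // /K mul_col_mx.
by rewrite det_ublock.
Qed.

End RestrictDet.

Section Eigenspaces.
Variables (n : nat) (u : 'M[algC]_n).

Lemma eigenspace_sub_Mspace l :
  l != 1 -> eigenvalue u l -> (eigenspace u l <= Mspace u)%MS.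
Proof.
move=> l_neq1 ul; have : root (char_poly u) l by rewrite -eigenvalue_root_char.
rewrite /Mspace /eigs; case: closed_field_poly_normal => rs /= ->.
rewrite (eqP (char_poly_monic u)) scale1r root_prod_XsubC -mem_undup => l_eig.
by rewrite (big_rem l l_eig) /= l_neq1 addsmxSl.
Qed.

Lemma stablemx_Mspace v : comm_mx u v -> stablemx (Mspace u) v.
Proof.
move=> uv; rewrite /Mspace; elim/big_ind: _ => [|V W VS WS|l _].
- by rewrite mul0mx sub0mx.
- by rewrite addsmxMr addsmxS.
- exact: comm_mx_stable_eigenspace.
Qed.

End Eigenspaces.

Section FiniteOrder.
Variables (n : nat) (u : 'M[algC]_n) (L : nat).
Hypotheses (L_gt0 : (0 < L)%N) (uL : u ^+ L = 1).

(* [avg] kills each eigenspace for an eigenvalue [l != 1] and acts as [L] on [Fix u]. *)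
Let avg := \sum_(j < L) u ^+ j.

Let avg_u : avg *m u = avg.
Proof.
rewrite /avg mulmx_suml; case: L L_gt0 uL => // L' _ uL'.
rewrite big_ord_recr big_ord_recl /= mulmxE -exprSr uL' addrC expr0; congr (_ + _).
by apply: eq_bigr => i _; rewrite -exprSr.
Qed.

Let eigenspace_avg l : l != 1 -> eigenspace u l *m avg = 0.
Proof.
move=> l_neq1; set E := eigenspace u l.
have Eu : E *m u = l *: E by apply/eigenspaceP.
have EuX j : E *m u ^+ j = l ^+ j *: E.
  elim: j => [|j IH]; first by rewrite expr0 mulmx1 scale1r.
  by rewrite exprSr mulmxE mulrA -mulmxE IH -scalemxAl Eu scalerA -exprSr.
have Eavg : E *m avg = (\sum_(j < L) l ^+ j) *: E.
  by rewrite /avg mulmx_sumr scaler_suml; apply: eq_bigr => j _; rewrite EuX.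
have : E *m avg = l *: (E *m avg).
  by rewrite -{1}avg_u mulmxA Eavg -scalemxAl Eu scalerA mulrC -scalerA -Eavg.
move/eqP; rewrite -subr_eq0 -{1}(scale1r (E *m avg)) -scalerBl scaler_eq0 subr_eq0.
by rewrite eq_sym (negbTE l_neq1) => /eqP.
Qed.

Lemma capmx_Fix_Mspace : (Fix u :&: Mspace u = 0)%MS.
Proof.
set X := (Fix u :&: Mspace u)%MS.
have /eigenspaceP : (X <= Fix u)%MS by rewrite capmxSl.
rewrite scale1r => Xu.
have : (X <= kermx avg)%MS.
  apply: submx_trans (capmxSr _ _) _; rewrite /Mspace; elim/big_ind: _ => [|V W VS WS|l l1].
  - exact: sub0mx.
  - by rewrite addsmx_sub VS WS.
  - by apply/sub_kermxP; rewrite eigenspace_avg.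
move/sub_kermxP; rewrite /avg mulmx_sumr (eq_bigr (fun _ => X)); last first.
  by move=> j _; elim: (val j) => [|k IH]; rewrite ?mulmx1 // exprSr mulmxE mulrA -mulmxE IH.
move/eqP; rewrite sumr_const card_ord -scaler_nat scaler_eq0 pnatr_eq0 eqn0Ngt L_gt0.
by move/eqP.
Qed.

Lemma addsmx_Fix_Mspace : (Fix u + Mspace u :=: 1%:M)%MS.
Proof.
apply/eqmxP; rewrite submx1 /=.
case: n u uL => [|n'] u' uL'; first by rewrite thinmx0 sub0mx.
have [z z_prim] := C_prim_root_exists L_gt0.
have : diagonalizable u'.
  apply/diagonalizableP; exists [seq z ^+ i | i <- iota 0 L].
    rewrite map_inj_in_uniq ?iota_uniq // => a b; rewrite !mem_iota /= !add0n => ha hb.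
    by move/eqP; rewrite (eq_prim_root_expr z_prim) !modn_small // => /eqP.
  rewrite big_map -(subn0 L) -/(index_iota 0 L) (factor_Xn_sub_1 z_prim).
  by apply: mxminpoly_min; rewrite rmorphB rmorphXn /= horner_mx_X uL' rmorph1 subrr.
case/diagonalizablePeigen => rs _ <-; elim/big_ind: _ => [|V W VS WS|l _].
- exact: sub0mx.
- by rewrite addsmx_sub VS WS.
have [->|l_neq1] := eqVneq l 1; first exact: addsmxSl.
have [->|ul] := eqVneq (eigenspace u' l) 0; first exact: sub0mx.
by apply: submx_trans (addsmxSr _ _); apply: eigenspace_sub_Mspace.
Qed.

Lemma det_Fix_Mspace v :
  comm_mx u v -> \det v = det_restr v (Fix u) * det_restr v (Mspace u).
Proof.
move=> uv; apply: det_restrict_adds.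
- exact/mxdirect_addsP/capmx_Fix_Mspace.
- exact: addsmx_Fix_Mspace.
- exact: comm_mx_stable_eigenspace.
- exact: stablemx_Mspace.
Qed.

End FiniteOrder.

Section PermOrbits.
Variables (N : nat) (s : {perm 'I_N}).
Local Notation u := (perm_mx s : 'M[algC]_N).

Lemma porbit_permV j : porbit s (s^-1%g j) = porbit s j.
Proof. by rewrite -!(porbitV s); have := porbit_perm s^-1 1 j; rewrite expg1. Qed.

Lemma porbit_permS j : porbit s (s j) = porbit s j.
Proof. by have := porbit_perm s 1 j; rewrite expg1. Qed.

Lemma porbit_in_porbits j : porbit s j \in porbits s.
Proof. exact: imset_f. Qed.

Lemma porbits_memV C j : C \in porbits s -> (s^-1%g j \in C) = (j \in C).
Proof. by case/imsetP => x _ ->; rewrite -!eq_porbit_mem porbit_permV. Qed.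

Lemma porbit_of_mem C j : C \in porbits s -> j \in C -> porbit s j = C.
Proof. by case/imsetP => x _ -> jx; apply/eqP; rewrite eq_porbit_mem. Qed.

Lemma sum_porbit_eq C x :
  C \in porbits s -> (\sum_(j < N) (porbit s j == C) * x = #|C| * x)%N.
Proof.
case/imsetP => a _ ->; rewrite -sum_nat_const [RHS]big_mkcond /=; apply: eq_bigr => j _.
by rewrite eq_porbit_mem; case: (j \in _); rewrite ?mul1n ?mul0n.
Qed.

Lemma sum_porbits_eq (F : {set 'I_N} -> nat) A :
  A \in porbits s -> (\sum_(C in porbits s) (C == A) * F C = F A)%N.
Proof.
by move=> hA; rewrite (bigD1 A) //= eqxx mul1n big1 ?addn0 // => C /andP [_ /negbTE ->].
Qed.

Lemma perm_mx_expg_order : (perm_mx s : 'M[algC]_N) ^+ #[s]%g = 1.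
Proof.
suff <- : perm_mx (s ^+ #[s])%g = (perm_mx s : 'M[algC]_N) ^+ #[s]%g.
  by rewrite expg_order perm_mx1.
elim: #[s]%g => [|k IH]; first by rewrite expg0 perm_mx1 expr0.
by rewrite expgS perm_mxM IH exprS mulmxE.
Qed.

Lemma mulmx_perm_mx m (x : 'M[algC]_(m, N)) i j : (x *m u) i j = x i (s^-1%g j).
Proof. by rewrite -[in perm_mx s](invgK s) -col_permE mxE. Qed.

Lemma perm_mx_mulmx m (x : 'M[algC]_(N, m)) i j : (u *m x) i j = x (s i) j.
Proof. by rewrite -row_permE mxE. Qed.

Lemma perm_fixed_row_porbit (y : 'rV[algC]_N) j k :
  y *m u = y -> k \in porbit s j -> y 0 k = y 0 j.
Proof.
move=> yu; rewrite -porbitV => /porbitP [i ->].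
elim: i => [|i IH]; first by rewrite expg0 perm1.
by rewrite expgSr permM -mulmx_perm_mx yu IH.
Qed.

Definition porbit_rep (i0 : 'I_N) (C : {set 'I_N}) : 'I_N := odflt i0 [pick x in C].

Lemma porbit_rep_mem i0 C : C \in porbits s -> porbit_rep i0 C \in C.
Proof.
case/imsetP => x _ ->; rewrite /porbit_rep; case: pickP => [y //|/(_ x)].
by rewrite porbit_id.
Qed.

Lemma porbit_rep_inj i0 : {in porbits s &, injective (porbit_rep i0)}.
Proof.
move=> C C' hC hC' e.
rewrite -(porbit_of_mem hC (porbit_rep_mem i0 hC)) e.
exact: porbit_of_mem hC' (porbit_rep_mem i0 hC').
Qed.

Definition orbit_mx : 'M[algC]_(#|porbits s|, N) :=
  \matrix_(k, j) (j \in (enum_val k : {set 'I_N}))%:R.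

Lemma row_free_orbit_mx : row_free orbit_mx.
Proof.
apply: inj_row_free => y y0; apply/rowP => k; have Ck := enum_valP k.
have [a _ ka] := imsetP Ck.
have := congr1 (fun z : 'rV_N => z 0 a) y0.
rewrite /= !mxE => <-; rewrite (bigD1 k) //= big1 ?addr0.
  by rewrite mxE ka porbit_id mulr1.
move=> k' k'k; rewrite mxE mulr_natr mulrb; case: ifP => // h.
by case/eqP: k'k; apply: enum_val_inj; rewrite -(porbit_of_mem (enum_valP k') h) ka.
Qed.

Lemma orbit_mx_Fix : (orbit_mx :=: Fix u)%MS.
Proof.
apply/eqmxP/andP; split.
  apply/eigenspaceP; rewrite scale1r; apply/matrixP => k j.
  by rewrite mulmx_perm_mx !mxE porbits_memV // enum_valP.
apply/row_subP => i; have /eigenspaceP := row_sub i (Fix u); rewrite scale1r.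
move: (row i (Fix u)) => y yu.
suff -> : y = (\row_k y 0 (porbit_rep i (enum_val k))) *m orbit_mx by apply: submxMl.
apply/rowP => j; rewrite mxE; have Cj := porbit_in_porbits j.
rewrite (bigD1 (enum_rank_in Cj (porbit s j))) //= big1 ?addr0.
  rewrite !mxE enum_rankK_in // porbit_id mulr1.
  by apply: (perm_fixed_row_porbit yu); rewrite porbit_sym porbit_rep_mem.
move=> k kj; rewrite !mxE mulr_natr mulrb; case: ifP => // h.
case/eqP: kj; apply: enum_val_inj.
by rewrite enum_rankK_in // (porbit_of_mem (enum_valP k) h).
Qed.

Section OrbitDiag.
Variable c : {set 'I_N} -> algC.

Definition orbit_diag : 'M[algC]_N := diag_mx (\row_j c (porbit s j)).

Lemma orbit_diag_comm : comm_mx u orbit_diag.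
Proof.
apply/matrixP => i j; rewrite mulmx_perm_mx perm_mx_mulmx !mxE porbit_permS.
by rewrite (canF_eq (permK s)).
Qed.

Lemma orbit_mx_diag :
  orbit_mx *m orbit_diag = diag_mx (\row_k c (enum_val k)) *m orbit_mx.
Proof.
rewrite mul_mx_diag mul_diag_mx; apply/matrixP => k j; rewrite !mxE.
rewrite mulr_natr mulr_natl !mulrb; case: ifP => // h.
by rewrite (porbit_of_mem (enum_valP k) h).
Qed.

Lemma det_restr_orbit_diag_Fix :
  det_restr orbit_diag (Fix u) = \prod_(C in porbits s) c C.
Proof.
have Fix_row_base : (row_base (Fix u) :=: orbit_mx)%MS.
  exact: eqmx_trans (eq_row_base _) (eqmx_sym orbit_mx_Fix).
rewrite /det_restr -/(conjmx _ _).
rewrite (det_conjmx_eqmx (row_base_free _) row_free_orbit_mx Fix_row_base); last first.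
  by rewrite orbit_mx_diag submxMl.
have -> : conjmx orbit_mx orbit_diag = diag_mx (\row_k c (enum_val k)).
  apply: (row_free_inj row_free_orbit_mx).
  by rewrite /= /conjmx mulmxKpV orbit_mx_diag ?submxMl.
by rewrite det_diag [RHS]big_enum_val; apply: eq_bigr => k _; rewrite mxE.
Qed.

End OrbitDiag.
End PermOrbits.

Section FixRestriction.
Variables (N : nat) (s : {perm 'I_N}) (r : {set 'I_N} -> nat).
Hypothesis N_gt0 : (0 < N)%N.
Hypothesis r_small : forall C, C \in porbits s -> (r C < N.-1)%N.
Local Notation u := (perm_mx s : 'M[algC]_N).
Local Notation rep := (porbit_rep (Ordinal N_gt0)).

(* Restriction to [Fix u], in the coordinates y_C = x_(rep C). *)
Local Notation restr p := (p \mPo [tuple ('X_(rep (porbit s j)) : {mpoly algC[N]}) | j < N]).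

Let mu : 'X_{1..N} := (\sum_(C in porbits s) U_(rep C) *+ r C)%MM.

Lemma restr_XU j : restr 'X_j = 'X_(rep (porbit s j)).
Proof. by rewrite comp_mpolyXU -tnth_nth tnth_mktuple. Qed.

Lemma restr_X m : restr 'X_[m] = 'X_[\sum_(j < N) U_(rep (porbit s j)) *+ m j].
Proof. by rewrite comp_mpolyX -mprodXnE; apply: eq_bigr => j _; rewrite tnth_mktuple. Qed.

Lemma mu_rep C : C \in porbits s -> mu (rep C) = r C.
Proof.
move=> hC; rewrite /mu mnm_sumE (bigD1 C) //= big1 ?addn0.
  by rewrite mulmnE mnm1E eqxx mul1n.
move=> C' /andP [hC' C'C]; rewrite mulmnE mnm1E; case: eqP => // e.
by rewrite (porbit_rep_inj hC' hC e) eqxx in C'C.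
Qed.

Lemma restr_Xpoly : restr (Xpoly s r) = (\prod_(C in porbits s) #|C|%:R ^+ r C) *: 'X_[mu].
Proof.
rewrite /Xpoly rmorph_prod /mu -mprodXnE -scaler_prod; apply: eq_bigr => C hC.
rewrite rmorphXn rmorph_sum /= (eq_bigr (fun _ => 'X_(rep C))); last first.
  by move=> k hk; rewrite restr_XU (porbit_of_mem hC hk).
by rewrite sumr_const -scaler_nat exprZn.
Qed.

Lemma mcoeff_mul_restr_X (g : {mpoly algC[N]}) (m : 'X_{1..N}) i :
  (N.-1 <= m i)%N -> (g * restr 'X_[m])@_mu = 0.
Proof.
move=> hm; rewrite restr_X mcoeffM big1 // => k /eqP km; rewrite mcoeffX.
case: eqP => [mk|]; last by rewrite mulr0.
have /(congr1 (fun m' : 'X_{1..N} => m' (rep (porbit s i)))) := km.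
rewrite /= mnmDE -mk mu_rep ?porbit_in_porbits //.
rewrite mnm_sumE (bigD1 i) //= mulmnE mnm1E eqxx mul1n.
have := r_small (porbit_in_porbits s i); lia.
Qed.

Lemma mcoeff_mul_restr_dderiv (g : {mpoly algC[N]}) (w : 'rV[algC]_N) :
  (g * restr (dderiv w (fermat N)))@_mu = 0.
Proof.
rewrite /dderiv /fermat rmorph_sum mulr_sumr raddf_sum big1 // => i _.
rewrite /= comp_mpolyZ -scalerAr mcoeffZ [X in X \mPo _]raddf_sum rmorph_sum mulr_sumr.
rewrite raddf_sum big1 ?mulr0 // => j _ /=.
rewrite mpolyXn mderivX comp_mpolyZ -scalerAr mcoeffZ mulmnE mnm1E.
have [->|ji] := eqVneq j i; last by rewrite mul0n mul0r.
rewrite (mcoeff_mul_restr_X _ (i := i)) ?mulr0 //.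
by rewrite mnmBE mulmnE !mnm1E eqxx mul1n subn1.
Qed.

Lemma restr_vanishing q :
  (forall x : 'rV[algC]_N, (x <= Fix u)%MS -> q.@[x 0] = 0) -> restr q = 0.
Proof.
move=> q0; apply: mpoly_eq0_meval => z; rewrite comp_mpoly_meval.
pose x : 'rV[algC]_N := \row_j z (rep (porbit s j)).
have xFix : (x <= Fix u)%MS.
  apply/eigenspaceP; rewrite scale1r; apply/rowP => j.
  by rewrite mulmx_perm_mx !mxE porbit_permV.
rewrite -(q0 x xFix); apply: meval_eq => j.
by rewrite tnth_mktuple mevalXU mxE.
Qed.

Lemma Xpoly_notin_jac_kernel kappa : in_jac_kernel u (kappa *: Xpoly s r) -> kappa = 0.
Proof.
case=> q [ws [q0 _ Xq]].
have := congr1 (fun p => (restr p)@_mu) Xq.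
rewrite /= comp_mpolyZ restr_Xpoly !mcoeffZ mcoeffX eqxx mulr1.
rewrite comp_mpolyD restr_vanishing // add0r rmorph_sum raddf_sum /=.
rewrite [X in _ = X]big1; last first.
  by move=> wh _ /=; rewrite rmorphM mcoeff_mul_restr_dderiv.
move/eqP; rewrite mulf_eq0 => /orP [/eqP //|]; apply/contraTeq => _.
apply/prodf_neq0 => C hC; rewrite expf_neq0 // pnatr_eq0.
by case/imsetP: hC => x _ ->; rewrite card_porbit_neq0.
Qed.

End FixRestriction.

Lemma pullback_orbit_diag_Xpoly N (s : {perm 'I_N}) c r :
  pullback (orbit_diag s c) (Xpoly s r) =
  (\prod_(C in porbits s) c C ^+ r C) *: Xpoly s r.
Proof.
rewrite /pullback /Xpoly rmorph_prod -scaler_prod; apply: eq_bigr => C hC /=.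
rewrite rmorphXn rmorph_sum -exprZn scaler_sumr /=; congr (_ ^+ _); apply: eq_bigr => k hk.
rewrite comp_mpolyXU -tnth_nth tnth_mktuple (bigD1 k) //= big1 ?addr0.
  by rewrite !mxE eqxx mulr1n (porbit_of_mem hC hk).
by move=> i /negbTE ik; rewrite !mxE ik mulr0n scale0r.
Qed.

Lemma det_orbit_diag_of_invariant N (s : {perm 'I_N}) c r :
  (0 < N)%N -> (forall C, C \in porbits s -> (r C < N.-1)%N) ->
  invariant_by (perm_mx s) (orbit_diag s c) (Xpoly s r) ->
  \det (orbit_diag s c) = \prod_(C in porbits s) c C ^+ (r C).+1.
Proof.
move=> N_gt0 r_small.
rewrite /invariant_by pullback_orbit_diag_Xpoly scalerA -{2}(scale1r (Xpoly s r)) -scalerBl.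
set lam := \prod_(C in porbits s) c C ^+ r C.
set del := det_restr (orbit_diag s c) (Mspace (perm_mx s)).
move/(Xpoly_notin_jac_kernel N_gt0 r_small)/eqP; rewrite subr_eq0 => /eqP del_lam.
have del_neq0 : del != 0.
  apply/eqP => del0; move: del_lam.
  by rewrite del0 invr0 mul0r => /eqP; rewrite eq_sym oner_eq0.
have del_eq : del = lam by rewrite -[lam](mulVKf del_neq0) del_lam mulr1.
rewrite (det_Fix_Mspace (order_gt0 s) (perm_mx_expg_order s) (orbit_diag_comm s c)).
rewrite -/del del_eq det_restr_orbit_diag_Fix /lam -big_split.
by apply: eq_bigr => C _; rewrite exprS.
Qed.

Lemma zeta_prim N : (0 < N)%N -> N.-primitive_root (zeta N).
Proof. by case: N => // n _; apply: (svalP (C_prim_root_exists _)). Qed.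

Lemma det_orbit_diag_expr N (s : {perm 'I_N}) (z : algC) (e : {set 'I_N} -> nat) :
  \det (orbit_diag s (fun C => z ^+ e C)) = z ^+ (\sum_(j < N) e (porbit s j)).
Proof. by rewrite det_diag -prodrXr; apply: eq_bigr => j _; rewrite mxE. Qed.

Lemma orbit_diag_centralizer N (S : {group {perm 'I_N}}) (s : {perm 'I_N}) e :
  (0 < N)%N -> (N %| \sum_(j < N) e (porbit s j))%N ->
  in_centralizer S (perm_mx s) (orbit_diag s (fun C => zeta N ^+ e C)).
Proof.
move=> N_gt0 /dvdnP [m sum_e]; split; last exact/esym/orbit_diag_comm.
exists 1%g, (orbit_diag s (fun C => zeta N ^+ e C)); rewrite perm_mx1 mul1mx.
split=> //; split; first by exists (fun j => e (porbit s j)).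
by rewrite det_orbit_diag_expr sum_e mulnC exprM (prim_expr_order (zeta_prim N_gt0)) expr1n.
Qed.

Section Arithmetic.
Local Open Scope nat_scope.
Variables (p : nat) (p_prime : prime p).

Lemma prime_ndvd_of_mod r k a : r <= p - 2 -> r + 1 = k * a %[mod p] -> ~~ (p %| a).
Proof.
move=> r_small e; apply/negP => /dvdnP [c ac]; move: e.
by rewrite ac mulnA modnMl modn_small ?addn1 //; have := prime_gt1 p_prime; lia.
Qed.

Lemma eq_mod_of_dvd_add_predM x y : p %| x + p.-1 * y -> x = y %[mod p].
Proof.
move=> /dvdnP [m hm]; have := prime_gt0 p_prime => p_gt0.
rewrite -(modnMDl y x) (_ : y * p + x = x + p.-1 * y + y); last by nia.
by rewrite -modnDml hm modnMl.
Qed.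

Lemma eq_of_cross_mod ra rb a b ka kb : ra <= p - 2 -> rb <= p - 2 ->
  0 < ka < p -> 0 < kb < p ->
  ra + 1 = ka * a %[mod p] -> rb + 1 = kb * b %[mod p] ->
  b * (ra + 1) = a * (rb + 1) %[mod p] -> ka = kb.
Proof.
move=> ra_small rb_small ka_bd kb_bd ea eb eab.
have na := prime_ndvd_of_mod ra_small ea; have nb := prime_ndvd_of_mod rb_small eb.
have e : ka * (a * b) = kb * (a * b) %[mod p].
  by rewrite {1}(mulnC a) mulnCA -modnMmr -ea modnMmr eab -modnMmr eb modnMmr mulnCA.
wlog ka_le : ka kb ka_bd kb_bd e {ea eb} / ka <= kb.
  by move=> wlog_le; case: (leqP ka kb) => [|/ltnW] le; [|apply/esym]; apply: wlog_le.
have : p %| (kb - ka) * (a * b) by rewrite mulnBl -eqn_mod_dvd ?leq_mul2r ?ka_le ?orbT // e.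
rewrite !Euclid_dvdM // (negbTE na) (negbTE nb) !orbF => /dvdn_leq p_le.
by clear -p_le ka_le kb_bd; lia.
Qed.

End Arithmetic.

Theorem proposition10 (N : nat) (HN : prime N) (S : {group {perm 'I_N}})
  (sigma : {perm 'I_N}) (Hsigma : sigma \in S) (r : {set 'I_N} -> nat)
  (Hr : forall A, A \in porbits sigma -> (r A <= N - 2)%N)
  (Hinv : forall v : 'M[algC]_N,
      in_centralizer S (perm_mx sigma) v ->
      invariant_by (perm_mx sigma) v (Xpoly sigma r)) :
  forall A B : {set 'I_N}, A \in porbits sigma -> B \in porbits sigma ->
  forall kA kB : nat, (0 < kA < N)%N -> (0 < kB < N)%N ->
    (r A + 1 = kA * #|A| %[mod N])%N ->
    (r B + 1 = kB * #|B| %[mod N])%N ->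
    kA = kB.
Proof.
move=> A B hA hB kA kB hkA hkB eA eB.
have N_gt0 := prime_gt0 HN.
have r_small C : C \in porbits sigma -> (r C < N.-1)%N.
  by move=> hC; have := Hr C hC; have := prime_gt1 HN; lia.
(* For A = B this gives e A = N |A|, i.e. D = 1: no case split is needed. *)
pose e C := ((C == A) * #|B| + (C == B) * (N.-1 * #|A|))%N.
have sum_e : (\sum_(j < N) e (porbit sigma j) = N * (#|A| * #|B|))%N.
  by rewrite big_split /= !sum_porbit_eq // mulnCA (mulnC #|B|) -mulSn prednK.
pose D := orbit_diag sigma (fun C => zeta N ^+ e C).
have D_centralizes : in_centralizer S (perm_mx sigma) D.
  by apply: orbit_diag_centralizer; rewrite ?sum_e ?dvdn_mulr.
have := det_orbit_diag_of_invariant N_gt0 r_small (Hinv _ D_centralizes).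
rewrite det_orbit_diag_expr sum_e exprM (prim_expr_order (zeta_prim N_gt0)) expr1n.
under eq_bigr do rewrite -exprM.
rewrite prodrXr => /esym/eqP; rewrite -(prim_order_dvd (zeta_prim N_gt0)).
under eq_bigr do rewrite mulnDl -!mulnA.
rewrite big_split /= !sum_porbits_eq // => /(eq_mod_of_dvd_add_predM HN) cross.
by apply: (eq_of_cross_mod HN (Hr A hA) (Hr B hB) hkA hkB eA eB); rewrite !addn1.
Qed.
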